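(* Let $A,B \in\mathbb{R}^{m\times n}$ and $b\in\mathbb{R}^m$ with $\operatorname{rank}(B) = m$ and $m<n$. If $B^\dagger b < 0$ and $\|B^\dagger A\|_\infty < \gamma/2$, where $\gamma = \dfrac{\min_i|(B^\dagger b)_i|}{\max_i|(B^\dagger b)_i|}$, then for every sign pattern $s\in\{1,-1\}^n$ the equation $Ax-B|x|=b$ has infinitely many solutions with sign pattern $s$.
   Context: $B^\dagger$ is the Moore–Penrose inverse; $|x|$ is the entrywise absolute value; vector inequalities are entrywise; $\|\cdot\|_\infty$ on matrices is the operator norm induced by the vector $\infty$-norm. A vector $x$ has sign pattern $s$ if $\operatorname{sign}(x_{(i)})=s_{(i)}$ for all $i$. *)

From HB Require Import structures.
From mathcomp Require Import all_boot all_order all_algebra.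
From mathcomp Require Import all_classical all_reals.
Set Implicit Arguments. Unset Strict Implicit. Unset Printing Implicit Defensive.
Import Order.TTheory GRing.Theory Num.Theory.
Local Open Scope ring_scope.

(* Moore–Penrose inverse over the reals: X is the MP inverse of M iff it
   satisfies the four Penrose conditions (conjugate transpose = transpose). *)
Definition is_MP_inverse {R : realType} {m n : nat}
  (M : 'M[R]_(m, n)) (X : 'M[R]_(n, m)) : Prop :=
  [/\ M *m X *m M = M,
      X *m M *m X = X,
      (M *m X)^T = M *m X
    & (X *m M)^T = X *m M].

Definition mx_abs {R : realType} {m n : nat} (M : 'M[R]_(m, n)) : 'M[R]_(m, n) :=
  map_mx (fun x => `|x|) M.

(* operator norm induced by the vector infinity-norm: max absolute row sum *)
Definition mx_norm_inf {R : realType} {m n : nat} (M : 'M[R]_(m, n)) : R :=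
  \big[Num.max/0]_(i < m) \sum_(j < n) `|M i j|.

Definition vmax_abs {R : realType} {n : nat} (v : 'cV[R]_n) : R :=
  \big[Num.max/0]_(i < n) `|v i 0|.
Definition vmin_abs {R : realType} {n : nat} (v : 'cV[R]_n) : R :=
  \big[Num.min/vmax_abs v]_(i < n) `|v i 0|.

Definition has_sign_pattern {R : realType} {n : nat} (x s : 'cV[R]_n) : Prop :=
  forall i, Num.sg (x i 0) = s i 0.

(* Put c := B^+ b, W := B^+ A and D := diag s.  For y > 0 the vector x := D y
   has sign pattern s and |x| = y, so x solves A x - B |x| = b as soon as
   y = -c + W D y, because B B^+ = I when B has full row rank.  In the
   sup-norm, y |-> -c + W D y is a contraction of ratio ||W|| < 1/2, so its
   fixed point y0 satisfies ||y0|| <= 2 max|c_i| and hence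
   y0_i >= min|c_j| - 2 ||W|| max|c_j| > 0.  On the orthant of sign pattern s
   the equation is the linear system (A - B D) x = b, whose kernel is
   nontrivial since m < n; moving x0 = D y0 slightly along a kernel vector
   stays in the orthant and gives infinitely many solutions. *)

From HB Require Import structures.
From mathcomp Require Import all_boot all_order all_algebra.
From mathcomp Require Import all_classical all_reals.
From mathcomp Require Import lra.
Set Implicit Arguments.
Unset Strict Implicit.

Import Order.TTheory GRing.Theory Num.Theory.
Local Open Scope ring_scope.
Local Open Scope classical_set_scope.

Lemma infinite_set_nat_inj (T : Type) (S : set T) (f : nat -> T) :
  injective f -> (forall k, S (f k)) -> infinite_set S.
Proof.
move=> f_inj Sf S_fin.
have : finite_set (f @^-1` S) by apply: finite_preimage => // k l _ _ /f_inj.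
suff -> : f @^-1` S = setT by apply: infinite_nat.
by apply/seteqP; split=> // k _; apply: Sf.
Qed.

Lemma cV_kernel_neq0 (F : fieldType) (m n : nat) (K : 'M[F]_(m, n)) :
  (m < n)%N -> exists2 v : 'cV_n, K *m v = 0 & v != 0.
Proof.
move=> lt_mn; have : cokermx K != 0.
  by rewrite cokermx_eq0 -col_leq_rank -ltnNge (leq_ltn_trans (rank_leq_row K)).
case: (pickP (fun j => col j (cokermx K) != 0)) => [j nz_j _ | col0].
  by exists (col j (cokermx K)); rewrite // colE mulmxA mulmx_coker mul0mx.
case/eqP; apply/matrixP => i j.
by have /negbFE/eqP/matrixP/(_ i 0) := col0 j; rewrite !mxE.
Qed.

Section SupNorm.
Variable R : realType.

Lemma vmax_abs_ge0 n (z : 'cV[R]_n) : 0 <= vmax_abs z.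
Proof.
apply: (big_ind (fun x => 0 <= x)) => // x y x_ge0 y_ge0.
by rewrite le_max x_ge0.
Qed.

Lemma normr_le_vmax_abs n (z : 'cV[R]_n) i : `|z i 0| <= vmax_abs z.
Proof. by rewrite /vmax_abs (bigD1 i) //= le_max lexx. Qed.

Lemma vmax_abs_le n (z : 'cV[R]_n) a :
  0 <= a -> (forall i, `|z i 0| <= a) -> vmax_abs z <= a.
Proof.
move=> a_ge0 za; apply: (big_ind (fun x => x <= a)) => // x y xa ya.
by rewrite ge_max xa.
Qed.

Lemma vmax_abs_gt0 n (z : 'cV[R]_n) : z != 0 -> 0 < vmax_abs z.
Proof.
apply: contraNT; rewrite -leNgt => z_le0; apply/eqP/matrixP => i j.
rewrite ord1 mxE; apply/normr0_eq0/le_anti.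
by rewrite normr_ge0 (le_trans (normr_le_vmax_abs z i)).
Qed.

Lemma vmin_abs_le n (z : 'cV[R]_n) i : vmin_abs z <= `|z i 0|.
Proof. by rewrite /vmin_abs (bigD1 i) //= ge_min lexx. Qed.

Lemma vmin_abs_le_vmax n (z : 'cV[R]_n) : vmin_abs z <= vmax_abs z.
Proof.
apply: (big_ind (fun x => x <= vmax_abs z)) => [// | x y xz yz | i _].
  by rewrite ge_min xz.
exact: normr_le_vmax_abs.
Qed.

Lemma vmin_abs_gt0 n (z : 'cV[R]_n) :
  (0 < n)%N -> (forall i, z i 0 != 0) -> 0 < vmin_abs z.
Proof.
move=> n_gt0 z_neq0.
have z_gt0 i : 0 < `|z i 0| by rewrite normr_gt0.
apply: (big_ind (fun x => 0 < x)) => [| x y x_gt0 y_gt0 | i _ //].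
  exact: lt_le_trans (z_gt0 (Ordinal n_gt0)) (normr_le_vmax_abs _ _).
by rewrite lt_min x_gt0.
Qed.

Lemma mx_norm_inf_ge0 m n (M : 'M[R]_(m, n)) : 0 <= mx_norm_inf M.
Proof.
apply: (big_ind (fun x => 0 <= x)) => [// | x y x_ge0 y_ge0 | i _].
  by rewrite le_max x_ge0.
exact: sumr_ge0.
Qed.

Lemma row_sum_le_mx_norm_inf m n (M : 'M[R]_(m, n)) i :
  \sum_j `|M i j| <= mx_norm_inf M.
Proof. by rewrite /mx_norm_inf (bigD1 i) //= le_max lexx. Qed.

Lemma normr_mulmx_le m n (M : 'M[R]_(m, n)) (z : 'cV[R]_n) i :
  `|(M *m z) i 0| <= mx_norm_inf M * vmax_abs z.
Proof.
rewrite mxE (le_trans (ler_norm_sum _ _ _)) //.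
apply: le_trans (ler_wpM2r (vmax_abs_ge0 z) (row_sum_le_mx_norm_inf M i)).
rewrite mulr_suml; apply: ler_sum => j _; rewrite normrM.
by apply: ler_wpM2l; [exact: normr_ge0 | exact: normr_le_vmax_abs].
Qed.

Lemma mx_norm_inf_mul_diag m n (M : 'M[R]_(m, n)) (d : 'rV[R]_n) :
  (forall j, `|d 0 j| = 1) -> mx_norm_inf (M *m diag_mx d) = mx_norm_inf M.
Proof.
move=> d_unit; apply: eq_bigr => i _; apply: eq_bigr => j _.
by rewrite mul_mx_diag mxE normrM d_unit mulr1.
Qed.

Lemma unitmx_1_sub n (M : 'M[R]_n) : mx_norm_inf M < 1 -> 1%:M - M \in unitmx.
Proof.
move=> M_lt1; rewrite -unitmx_tr -row_free_unit; apply: inj_row_free => u.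
move=> /(congr1 trmx); rewrite trmx_mul trmxK trmx0 mulmxBl mul1mx => /eqP.
rewrite subr_eq0 => /eqP u_fix; apply/eqP; rewrite -trmx_eq0.
apply: contraTT M_lt1 => /vmax_abs_gt0 u_gt0; rewrite -leNgt -(ler_pM2r u_gt0) mul1r.
apply: vmax_abs_le => [|i]; first by rewrite mulr_ge0 ?mx_norm_inf_ge0 ?vmax_abs_ge0.
by rewrite {1}u_fix normr_mulmx_le.
Qed.

End SupNorm.

Section FixedPoint.
Variable R : realType.

Lemma mx_norm_inf_lt_half m n (M : 'M[R]_(m, n)) (c : 'cV[R]_n) :
  mx_norm_inf M * vmax_abs c < vmin_abs c / 2 -> mx_norm_inf M < 1 / 2.
Proof.
have := mx_norm_inf_ge0 M; have := vmin_abs_le_vmax c; have := vmax_abs_ge0 c.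
nra.
Qed.

Lemma fixpoint_gt0 n (M : 'M[R]_n) (c y : 'cV[R]_n) :
  (forall i, c i 0 < 0) -> mx_norm_inf M * vmax_abs c < vmin_abs c / 2 ->
  y = - c + M *m y -> forall i, 0 < y i 0.
Proof.
move=> c_lt0 M_small y_fix; have M_half := mx_norm_inf_lt_half M_small.
have N_ge0 := mx_norm_inf_ge0 M; have My_le i := normr_mulmx_le M y i.
have yE i : y i 0 = - c i 0 + (M *m y) i 0 by rewrite {1}y_fix !mxE.
set N := mx_norm_inf M in M_small M_half N_ge0 My_le *.
set Y := vmax_abs y in My_le *.
have NY_ge0 : 0 <= N * Y by rewrite mulr_ge0 ?vmax_abs_ge0.
have Y_le : Y <= vmax_abs c + N * Y.
  apply: vmax_abs_le => [|i]; first exact: addr_ge0 (vmax_abs_ge0 c) NY_ge0.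
  rewrite yE (le_trans (ler_normD _ _)) // normrN.
  by rewrite lerD ?normr_le_vmax_abs ?My_le.
have NY_lt : N * Y < vmin_abs c.
  have NY_le : N * Y <= N * vmax_abs c + N * (N * Y) by rewrite -mulrDr ler_wpM2l.
  have NNY_le : N * (N * Y) <= 1 / 2 * (N * Y)
    by apply: ler_wpM2r => //; exact: ltW.
  lra.
move=> i; have := vmin_abs_le c i; rewrite (ltr0_norm (c_lt0 i)) => c_ge.
have := My_le i; have := ler_norm (- (M *m y) i 0); rewrite normrN yE.
lra.
Qed.

Lemma fixpoint_exists_gt0 n (M : 'M[R]_n) (c : 'cV[R]_n) :
  (forall i, c i 0 < 0) -> mx_norm_inf M * vmax_abs c < vmin_abs c / 2 ->
  exists2 y, y = - c + M *m y & forall i, 0 < y i 0.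
Proof.
move=> c_lt0 M_small; pose y := invmx (1%:M - M) *m - c.
have M_lt1 : mx_norm_inf M < 1.
  apply: lt_trans (mx_norm_inf_lt_half M_small) _.
  by rewrite ltr_pdivrMr // mul1r ltr1n.
have y_fix : y = - c + M *m y.
  have : (1%:M - M) *m y = - c by rewrite mulKVmx ?unitmx_1_sub.
  by rewrite mulmxBl mul1mx => <-; rewrite subrK.
by exists y; last exact: fixpoint_gt0 c_lt0 M_small y_fix.
Qed.

End FixedPoint.

Lemma inner_inverse_row_free (F : fieldType) (m n : nat)
    (B : 'M[F]_(m, n)) (X : 'M[F]_(n, m)) :
  row_free B -> B *m X *m B = B -> B *m X = 1%:M.
Proof. by move=> B_free BXB; apply: (row_free_inj B_free); rewrite /= BXB mul1mx. Qed.

Section SignPattern.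
Variable R : realType.

Lemma sgr_addr_small (x y : R) : `|y| < `|x| -> Num.sg (x + y) = Num.sg x.
Proof.
move=> yx; have := ler_norm y; have := ler_norm (- y); rewrite normrN.
case: (ltgtP x 0) yx => [x_lt0 | x_gt0 | ->]; last by rewrite normr0 ltNge normr_ge0.
- by rewrite (ltr0_norm x_lt0) => yx *; rewrite !ltr0_sg //; lra.
- by rewrite (gtr0_norm x_gt0) => yx *; rewrite !gtr0_sg //; lra.
Qed.

Lemma mx_abs_sign_pattern n (x s : 'cV[R]_n) :
  has_sign_pattern x s -> mx_abs x = diag_mx s^T *m x.
Proof.
by move=> xs; apply/matrixP => i j; rewrite ord1 mul_diag_mx !mxE normrEsg xs.
Qed.

Lemma diag_mulmxE n (s z : 'cV[R]_n) i : (diag_mx s^T *m z) i 0 = s i 0 * z i 0.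
Proof. by rewrite mul_diag_mx !mxE. Qed.

Lemma sign_pattern_diag_gt0 n (s y : 'cV[R]_n) :
  (forall i, `|s i 0| = 1) -> (forall i, 0 < y i 0) ->
  has_sign_pattern (diag_mx s^T *m y) s.
Proof.
move=> s_unit y_gt0 i; rewrite diag_mulmxE sgrM (gtr0_sg (y_gt0 i)) mulr1.
by rewrite {2}[s i 0]numEsg s_unit mulr1.
Qed.

Lemma mx_abs_diag_gt0 n (s y : 'cV[R]_n) :
  (forall i, `|s i 0| = 1) -> (forall i, 0 < y i 0) ->
  mx_abs (diag_mx s^T *m y) = y.
Proof.
move=> s_unit y_gt0; apply/matrixP => i j.
by rewrite ord1 mxE diag_mulmxE normrM s_unit mul1r gtr0_norm.
Qed.

Lemma scaled_line_inj n (x v : 'cV[R]_n) (e : R) :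
  v != 0 -> e != 0 -> injective (fun k : nat => x + (e / k.+2%:R) *: v).
Proof.
move=> v_neq0 e_neq0 k l /addrI /eqP; rewrite -subr_eq0 -scalerBl scalemx_eq0.
rewrite (negbTE v_neq0) orbF subr_eq0 => /eqP /(mulfI e_neq0) /invr_inj /eqP.
by rewrite eqr_nat => /eqP [].
Qed.

Lemma infinite_affine_sign_pattern m n (K : 'M[R]_(m, n)) (b : 'cV[R]_m)
    (x0 s : 'cV[R]_n) :
  (m < n)%N -> K *m x0 = b -> (forall i, s i 0 != 0) -> has_sign_pattern x0 s ->
  infinite_set [set x | K *m x = b /\ has_sign_pattern x s].
Proof.
move=> lt_mn Kx0 s_neq0 x0s; have [v Kv v_neq0] := cV_kernel_neq0 K lt_mn.
have x0_neq0 i : x0 i 0 != 0 by rewrite -sgr_eq0 x0s s_neq0.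
have n_gt0 : (0 < n)%N by apply: leq_ltn_trans lt_mn.
have x0_gt0 := vmin_abs_gt0 n_gt0 x0_neq0; have v_gt0 := vmax_abs_gt0 v_neq0.
pose e := vmin_abs x0 / vmax_abs v.
have e_gt0 : 0 < e by rewrite divr_gt0.
have line_inj := scaled_line_inj (x := x0) v_neq0 (lt0r_neq0 e_gt0).
apply: (infinite_set_nat_inj line_inj) => k.
split; first by rewrite mulmxDr -scalemxAr Kv scaler0 addr0.
move=> i; rewrite !mxE -x0s; apply: sgr_addr_small.
have k2_gt0 : 0 < k.+2%:R :> R by rewrite ltr0n.
rewrite normrM gtr0_norm ?divr_gt0 //.
apply: le_lt_trans (ler_wpM2l _ (normr_le_vmax_abs v i)) _.
  by rewrite ltW ?divr_gt0.
rewrite mulrAC divfK ?lt0r_neq0 //.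
apply: lt_le_trans (vmin_abs_le x0 i); rewrite ltr_pdivrMr // ltr_pMr // ltr1n //.
Qed.

End SignPattern.

Theorem corollary3p3 (R : realType) (m n : nat)
  (A B : 'M[R]_(m, n)) (b : 'cV[R]_m) (Bp : 'M[R]_(n, m)) :
  is_MP_inverse B Bp ->
  \rank B = m ->
  (m < n)%N ->
  (forall i, (Bp *m b) i 0 < 0) ->
  mx_norm_inf (Bp *m A) < (vmin_abs (Bp *m b) / vmax_abs (Bp *m b)) / 2 ->
  forall s : 'cV[R]_n, (forall i, s i 0 = 1 \/ s i 0 = -1) ->
    infinite_set [set x : 'cV[R]_n |
                   A *m x - B *m mx_abs x = b /\ has_sign_pattern x s].
Proof.
move=> [BXB _ _ _] rkB lt_mn c_lt0 W_small s s_pm1.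
set c := Bp *m b in c_lt0 W_small; set W := Bp *m A in W_small.
pose D := diag_mx s^T.
have s_unit i : `|s i 0| = 1 by case: (s_pm1 i) => ->; rewrite ?normrN normr1.
have c_gt0 : 0 < vmax_abs c.
  pose i0 := Ordinal (leq_ltn_trans (leq0n m) lt_mn).
  by apply: lt_le_trans (normr_le_vmax_abs c i0); rewrite normr_gt0 ltr0_neq0.
have WD_small : mx_norm_inf (W *m D) * vmax_abs c < vmin_abs c / 2.
  by rewrite mx_norm_inf_mul_diag => [|j]; rewrite ?mxE // -ltr_pdivlMr // mulrAC.
have [y0 y0_fix y0_gt0] := fixpoint_exists_gt0 c_lt0 WD_small.
pose x0 := D *m y0.
have BBp : B *m Bp = 1%:M by apply: inner_inverse_row_free; rewrite // /row_free rkB.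
have x0_sign : has_sign_pattern x0 s := sign_pattern_diag_gt0 s_unit y0_gt0.
have x0_solves : (A - B *m D) *m x0 = b.
  rewrite mulmxBl -mulmxA -(mx_abs_sign_pattern x0_sign) mx_abs_diag_gt0 //.
  rewrite {1}y0_fix mulmxDr mulmxN /c /W !mulmxA BBp !mul1mx.
  by rewrite opprD opprK addrC subrK.
have s_neq0 i : s i 0 != 0 by rewrite -normr_eq0 s_unit oner_neq0.
apply: sub_infinite_set (infinite_affine_sign_pattern lt_mn x0_solves s_neq0 x0_sign).
by move=> x [Kx xs]; split; rewrite // (mx_abs_sign_pattern xs) mulmxA -mulmxBl.
Qed.
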